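(* For each $n$, consider the functions ${\operatorname{mr}}_+,\ {\operatorname{mr}}:\mathbf S_{n,+}\to\{0,1,\dots,n\}$ defined by \[{\operatorname{mr}}_+(\Sigma)=\min\{\operatorname{rank}(\hat\Sigma)\mid \Sigma=\tilde\Sigma+\hat\Sigma,\ \tilde\Sigma\ge 0,\ \hat\Sigma\ge 0,\ \tilde\Sigma\text{ diagonal}\},\] \[{\operatorname{mr}}(\Sigma)=\min\{\operatorname{rank}(\hat\Sigma)\mid \Sigma=\tilde\Sigma+\hat\Sigma,\ \hat\Sigma\ge 0,\ \tilde\Sigma\text{ diagonal}\}\] (in the second, $\tilde\Sigma$ is a real diagonal matrix not required to be positive semidefinite). Then ${\operatorname{mr}}_+$ is lower semicontinuous, whereas ${\operatorname{mr}}$ is not lower semicontinuous (in general).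
   Context: $\mathbf S_n$ denotes the real symmetric $n\times n$ matrices and $\mathbf S_{n,+}$ the positive semidefinite ones; $M\ge 0$ means $M$ is positive semidefinite. All matrices $\tilde\Sigma,\hat\Sigma$ are real symmetric $n\times n$. *)

From HB Require Import structures.
From mathcomp Require Import all_boot all_order all_algebra.
From mathcomp Require Import boolp reals.
Set Implicit Arguments. Unset Strict Implicit. Unset Printing Implicit Defensive.
Import Order.TTheory GRing.Theory Num.Theory.
Local Open Scope ring_scope.

Definition psd (R : realType) (n : nat) (M : 'M[R]_n) : Prop :=
  M^T = M /\ forall v : 'rV[R]_n, 0 <= (v *m M *m v^T) 0 0.

(* k is an attainable rank in the definition of mr_+ (pos = true) or mr (pos = false) *)
Definition mr_feasible (R : realType) (n : nat) (pos : bool) (S : 'M[R]_n) (k : nat) : bool :=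
  `[< exists Dt Dh : 'M[R]_n,
        [/\ S = Dt + Dh, is_diag_mx Dt, (pos -> psd Dt), psd Dh & \rank Dh = k] >].

(* minimum of the feasible ranks (0 if there are none, which never happens on S_{n,+}) *)
Definition mr_gen (R : realType) (n : nat) (pos : bool) (S : 'M[R]_n) : nat :=
  match pselect (exists k, mr_feasible pos S k) with
  | left h => ex_minn h
  | right _ => 0%N
  end.

Definition mr_plus (R : realType) (n : nat) (S : 'M[R]_n) : nat := mr_gen true S.
Definition mr (R : realType) (n : nat) (S : 'M[R]_n) : nat := mr_gen false S.

Definition lsc_on_psd (R : realType) (n : nat) (f : 'M[R]_n -> nat) : Prop :=
  forall S : 'M[R]_n, psd S ->
    exists2 e : R, 0 < e &
      forall S' : 'M[R]_n, psd S' -> (forall i j, `|S' i j - S i j| < e) ->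
        (f S <= f S')%N.

From mathcomp Require Import all_boot all_order all_algebra.
From mathcomp Require Import boolp classical_sets reals topology normedtype.
From mathcomp Require Import ring lra.
Set Implicit Arguments. Unset Strict Implicit. Unset Printing Implicit Defensive.
Import Order.TTheory GRing.Theory Num.Theory.
Import numFieldNormedType.Exports.
Local Open Scope ring_scope.

(* Lower semicontinuity of mr_+ at S: if matrices S_k -> S admit decompositions
   S_k = D_k + H_k with D_k >= 0 diagonal, H_k >= 0 and rank H_k < r, then
   0 <= D_k <= diag S_k keeps the D_k in a compact box, so along a subsequence D_k -> D;
   then H_k -> S - D, and both positive semidefiniteness and rank < r are closed conditions
   (the latter because rank is lower semicontinuous), so mr_+(S) < r.
   Without D >= 0 the box is lost: for S_t = [[2,1,1],[1,2,t^2],[1,t^2,2]], the rank-one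
   matrix v^T v with v = (1/t, t, t) differs from S_t only on the diagonal, so mr(S_t) <= 1,
   while mr(S_0) >= 2 since every S_0 - D has the invertible 2x2 minor [[2 - D_00, 1], [1, 0]]. *)

Section EntrywiseBounds.
Variable R : realFieldType.

Lemma ler_sum_term (I : finType) (F : I -> R) i0 :
  (forall i, 0 <= F i) -> F i0 <= \sum_i F i.
Proof. by move=> F_ge0; rewrite (bigD1 i0) //= lerDl sumr_ge0. Qed.

Lemma norm_mulmx3_le a b c d (P : 'M[R]_(a, b)) (E : 'M[R]_(b, c)) (Q : 'M[R]_(c, d))
    (e : R) i j :
  (forall k l, `|E k l| <= e) ->
  `|(P *m E *m Q) i j| <= e * (\sum_k `|P i k|) * (\sum_l `|Q l j|).
Proof.
move=> E_le; rewrite mxE (le_trans (ler_norm_sum _ _ _)) // mulr_sumr.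
apply: ler_sum => l _; rewrite mxE normrM ler_wpM2r //.
rewrite (le_trans (ler_norm_sum _ _ _)) // mulr_sumr.
by apply: ler_sum => k _; rewrite normrM mulrC ler_wpM2r.
Qed.

(* [v = - v N] forces the l1-norm [s] of [v] to satisfy [s <= k eta s] *)
Lemma row_free_1addN k (N : 'M[R]_k) (eta : R) :
  (forall i j, `|N i j| <= eta) -> k%:R * eta < 1 -> row_free (1%:M + N).
Proof.
move=> N_le keta_lt1; apply: inj_row_free => v.
rewrite mulmxDr mulmx1 => /eqP; rewrite addr_eq0 => /eqP vE.
set s := \sum_l `|v 0 l|.
have s_ge0 : 0 <= s by rewrite sumr_ge0.
have v_le j : `|v 0 j| <= eta * s.
  rewrite vE mxE normrN mxE (le_trans (ler_norm_sum _ _ _)) // mulr_sumr.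
  by apply: ler_sum => l _; rewrite normrM mulrC ler_wpM2r.
have : s <= k%:R * eta * s.
  rewrite (le_trans (ler_sum _ (fun j _ => v_le j))) //.
  by rewrite sumr_const card_ord -mulrA mulr_natl.
move=> s_le; have s_eq0 : s = 0 by apply/eqP; rewrite eq_le s_ge0 andbT; nra.
apply/rowP => j; apply/eqP; rewrite mxE -normr_eq0 eq_le normr_ge0 andbT -s_eq0.
exact: ler_sum_term.
Qed.

Definition mx_close m n (e : R) (A B : 'M[R]_(m, n)) := forall i j, `|A i j - B i j| < e.

(* If [P A Q = 1], then [P B Q] is a small perturbation of [1] for [B] near [A]. *)
Lemma rank_lsc m n (A : 'M[R]_(m, n)) :
  exists2 d : R, 0 < d & forall B, mx_close d B A -> (\rank A <= \rank B)%N.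
Proof.
have [P PA] := row_fullP (col_base_full A).
have [Q AQ] := row_freeP (row_base_free A).
have PAQ : P *m A *m Q = 1%:M by rewrite -[X in P *m X](mulmx_base A) mulmxA PA mul1mx AQ.
set CP := \sum_i \sum_k `|P i k|; set CQ := \sum_j \sum_l `|Q l j|.
have CP_ge0 : 0 <= CP by do 2!apply: sumr_ge0 => ? _.
have CQ_ge0 : 0 <= CQ by do 2!apply: sumr_ge0 => ? _.
set D := ((\rank A)%:R + 1) * (CP + 1) * (CQ + 1).
have D_gt0 : 0 < D by rewrite !mulr_gt0 // ltr_wpDl.
exists D^-1; first by rewrite invr_gt0.
move=> B BA; set N := P *m (B - A) *m Q.
have N_le i j : `|N i j| <= D^-1 * CP * CQ.
  have BA_le k l : `|(B - A) k l| <= D^-1 by rewrite !mxE; exact/ltW/BA.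
  apply: le_trans (norm_mulmx3_le P Q i j BA_le) _.
  rewrite -!mulrA; apply: ler_wpM2l; first by rewrite invr_ge0 ltW.
  apply: ler_pM; [by apply: sumr_ge0 | by apply: sumr_ge0 | |].
    by apply: (ler_sum_term (F := fun i => \sum_k `|P i k|)) => ?; apply: sumr_ge0.
  by apply: (ler_sum_term (F := fun j => \sum_l `|Q l j|)) => ?; apply: sumr_ge0.
have rN_lt1 : (\rank A)%:R * (D^-1 * CP * CQ) < 1.
  rewrite mulrCA -mulrA mulrC ltr_pdivrMr // mul1r /D.
  have : 0 <= ((\rank A)%:R : R) by [].
  nra.
move: (row_free_1addN N_le rN_lt1) => /eqP; rewrite /N mulmxBr mulmxBl PAQ addrC subrK => <-.
exact: leq_trans (mxrankM_maxl _ _) (mxrankM_maxr _ _).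
Qed.

Lemma rank_lt_closed m n (A : 'M[R]_(m, n)) r :
  (forall e : R, 0 < e -> exists2 B, mx_close e B A & (\rank B < r)%N) ->
  (\rank A < r)%N.
Proof.
move=> approx; have [d d_gt0 rankA_le] := rank_lsc A.
by have [B BA rB] := approx d d_gt0; exact: leq_ltn_trans (rankA_le B BA) rB.
Qed.
End EntrywiseBounds.

Section PsdMatrices.
Variable R : realType.

Lemma psd0 n : psd (0 : 'M[R]_n).
Proof. by split=> [|v]; rewrite ?trmx0 // mulmx0 mul0mx mxE. Qed.

Lemma psd_diag_mx n (c : 'rV[R]_n) : (forall i, 0 <= c 0 i) -> psd (diag_mx c).
Proof.
move=> c_ge0; split=> [|v]; first exact: tr_diag_mx.
rewrite mul_mx_diag mxE; apply: sumr_ge0 => j _.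
by rewrite !mxE mulrAC -expr2 mulr_ge0 ?sqr_ge0.
Qed.

Lemma psd_diag_ge0 n (H : 'M[R]_n) i : psd H -> 0 <= H i i.
Proof.
by case=> _ /(_ (delta_mx 0 i)); rewrite -rowE trmx_delta -colE !mxE.
Qed.

Definition qform n (v : 'rV[R]_n) (A : 'M[R]_n) : R := (v *m A *m v^T) 0 0.

Lemma qformB n (v : 'rV[R]_n) A B : qform v (A - B) = qform v A - qform v B.
Proof. by rewrite /qform mulmxBr mulmxBl !mxE. Qed.

Lemma norm_qform_le n (v : 'rV[R]_n) (A : 'M[R]_n) (e : R) :
  (forall i j, `|A i j| <= e) -> `|qform v A| <= e * (\sum_k `|v 0 k|) ^+ 2.
Proof.
move=> A_le; rewrite expr2 mulrA (le_trans (norm_mulmx3_le v v^T 0 0 A_le)) //.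
suff -> : \sum_l `|v^T l 0| = \sum_k `|v 0 k| by [].
by apply: eq_bigr => l _; rewrite mxE.
Qed.

(* An entrywise [e]-perturbation moves [qform v] by at most [e |v|_1^2], which for the [e]
   chosen below is less than [- qform v H]. *)
Lemma psd_closed n (H : 'M[R]_n) : H^T = H ->
  (forall e : R, 0 < e -> exists2 H', psd H' & mx_close e H' H) -> psd H.
Proof.
move=> HT approx; split=> // v; rewrite leNgt -/(qform v H); apply/negP => q_lt0.
have ss1_gt0 : 0 < (\sum_k `|v 0 k|) ^+ 2 + 1 by rewrite ltr_wpDl ?sqr_ge0.
pose e : R := - qform v H / ((\sum_k `|v 0 k|) ^+ 2 + 1).
have e_gt0 : 0 < e by rewrite divr_gt0 // oppr_gt0.
have eE : e * ((\sum_k `|v 0 k|) ^+ 2 + 1) = - qform v H by rewrite divfK ?gt_eqF.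
have [H' [_ /(_ v) q'_ge0] H'H] := approx e e_gt0.
have E_le i j : `|(H' - H) i j| <= e by rewrite !mxE; exact/ltW/H'H.
have := norm_qform_le v E_le; rewrite qformB ler_norml => /andP[_].
move: q'_ge0; rewrite -/(qform v H'); nra.
Qed.
End PsdMatrices.

Section Compactness.
Local Open Scope classical_set_scope.

Lemma box_seq_cluster (R : realType) m (lo hi : 'I_m -> R) (d : nat -> 'rV[R]_m) :
  (forall k i, lo i <= d k 0 i <= hi i) ->
  exists2 c : 'rV[R]_m, (forall i, lo i <= c 0 i <= hi i) &
    forall (e : R) (N : nat), 0 < e ->
      exists2 k, (N <= k)%N & forall i, `|d k 0 i - c 0 i| < e.
Proof.
move=> d_box; set K := [set v : 'rV[R]_m | forall i, `[lo i, hi i] (v 0 i)].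
have K_compact : compact K.
  by apply: (@rV_compact _ _ (fun i => `[lo i, hi i])) => i; exact: segment_compact.
have dK : (d @ \oo) K by exists 0%N => // k _ i /=; rewrite in_itv /= d_box.
have [c [Kc c_cluster]] := K_compact _ _ dK.
exists c => [i|e N e_gt0]; first by have := Kc i; rewrite /= in_itv.
have d_tail : (d @ \oo) [set x | exists2 k, (N <= k)%N & x = d k].
  by apply: filterS (nbhs_infty_ge N) => k Nk /=; exists k.
have [_ [[k Nk ->] /= [_ dk_near]]] := c_cluster _ _ d_tail (nbhsx_ballx c e e_gt0).
by exists k => // i; have := dk_near 0 i; rewrite /ball /= distrC.
Qed.
End Compactness.

Section MinimalRank.
Variable R : realType.
Implicit Types (pos : bool) (n : nat).

Lemma psd_mr_feasible pos n (S : 'M[R]_n) : psd S -> mr_feasible pos S (\rank S).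
Proof.
move=> S_psd; apply/asboolP; exists 0, S; split; rewrite ?add0r //.
  by apply/is_diag_mxP => i j _; rewrite mxE.
by move=> _; exact: psd0.
Qed.

Lemma mr_gen_le pos n (S : 'M[R]_n) k : mr_feasible pos S k -> (mr_gen pos S <= k)%N.
Proof.
rewrite /mr_gen => Sk; case: pselect => [ex|[]]; last by exists k.
by case: ex_minnP => k0 _; apply.
Qed.

Lemma mr_gen_feasible pos n (S : 'M[R]_n) : psd S -> mr_feasible pos S (mr_gen pos S).
Proof.
rewrite /mr_gen => S_psd; case: pselect => [ex|[]]; first by case: ex_minnP.
by exists (\rank S); exact: psd_mr_feasible.
Qed.

Lemma diag_le_psd_add n (D H : 'M[R]_n) i :
  psd D -> psd H -> 0 <= D i i <= (D + H) i i.
Proof.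
move=> D_psd H_psd; rewrite psd_diag_ge0 //= mxE lerDl.
exact: psd_diag_ge0.
Qed.

Lemma mx_close_sub_diag n (S D H : 'M[R]_n) (c : 'rV[R]_n) (e1 e2 : R) :
  mx_close e1 (D + H) S -> is_diag_mx D -> (forall i, `|D i i - c 0 i| < e2) ->
  mx_close (e1 + e2) H (S - diag_mx c).
Proof.
move=> DHS D_diag Dc i j.
have -> : H i j - (S - diag_mx c) i j = ((D + H) i j - S i j) - (D i j - diag_mx c i j).
  by rewrite !mxE; ring.
rewrite (le_lt_trans (ler_normB _ _)) // ltrD //.
have [<-|ij] := eqVneq i j; first by rewrite mxE eqxx mulr1n.
by rewrite (is_diag_mxP D_diag) // mxE (negbTE ij) mulr0n subrr normr0 (le_lt_trans _ (Dc i)).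
Qed.

Lemma mr_plus_lt_closed n (S : 'M[R]_n) r : psd S ->
  (forall e : R, 0 < e -> exists S', [/\ psd S', mx_close e S' S & (mr_plus S' < r)%N]) ->
  (mr_plus S < r)%N.
Proof.
move=> S_psd approx.
have decomp k : exists DH : 'M[R]_n * 'M[R]_n,
    [/\ mx_close k.+1%:R^-1 (DH.1 + DH.2) S, is_diag_mx DH.1, psd DH.1, psd DH.2
      & (\rank DH.2 < r)%N].
  have [S' [S'_psd S'S mrS'_lt]] : exists S', [/\ psd S', mx_close k.+1%:R^-1 S' S
      & (mr_plus S' < r)%N] by apply: approx; rewrite invr_gt0.
  have /asboolP[D [H [SDH D_diag D_psd H_psd rkH]]] := mr_gen_feasible true S'_psd.
  by exists (D, H); split; rewrite -?SDH ?rkH //; exact: D_psd.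
have [DH DH_spec] := choice decomp.
pose d k := \row_i (DH k).1 i i.
have d_box k i : 0 <= d k 0 i <= S i i + 1.
  have [DHS _ D_psd H_psd _] := DH_spec k; rewrite mxE.
  have /andP[-> /le_trans->] // := diag_le_psd_add i D_psd H_psd.
  have := DHS i i; rewrite ltr_distl => /andP[_ /ltW/le_trans->] //.
  by rewrite lerD2l invf_le1 ?ler1n ?ltr0Sn.
have [c c_box c_cluster] := box_seq_cluster d_box.
have H_approx e : 0 < e ->
    exists H, [/\ mx_close e H (S - diag_mx c), psd H & (\rank H < r)%N].
  move=> e_gt0; have e2_gt0 : 0 < e / 2 by rewrite divr_gt0.
  have [N] := ltr_add_invr e2_gt0; rewrite add0r => N_lt.
  have [k Nk dc] := c_cluster _ N e2_gt0.
  have [DHS D_diag _ H_psd rk] := DH_spec k.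
  exists (DH k).2; split=> //; rewrite [e]splitr.
  apply: mx_close_sub_diag D_diag _ => [i j|i]; last by have := dc i; rewrite mxE.
  apply: lt_le_trans (DHS i j) (le_trans _ (ltW N_lt)).
  by rewrite lef_pV2 ?posrE // ler_nat.
have H_psd : psd (S - diag_mx c).
  apply: psd_closed => [|e /H_approx[H [HS H_psd _]]]; last by exists H.
  by rewrite linearB /= tr_diag_mx S_psd.1.
have H_rank : (\rank (S - diag_mx c)%R < r)%N.
  by apply: rank_lt_closed => e /H_approx[H [HS _ rH]]; exists H.
apply: leq_ltn_trans (mr_gen_le _) H_rank; apply/asboolP.
exists (diag_mx c), (S - diag_mx c); split => //; first by rewrite addrC subrK.
by move=> _; apply: psd_diag_mx => i; have /andP[] := c_box i.
Qed.

Lemma mr_plus_lsc n : lsc_on_psd (@mr_plus R n).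
Proof.
move=> S S_psd; apply: contrapT => not_lsc.
suff : (mr_plus S < mr_plus S)%N by rewrite ltnn.
apply: mr_plus_lt_closed => // e e_gt0; apply: contrapT => no_S'.
apply: not_lsc; exists e => // S' S'_psd S'S; rewrite leqNgt.
by apply/negP => lt_S'; apply: no_S'; exists S'.
Qed.
End MinimalRank.

Section Counterexample.
Variable R : realType.

Lemma mxrank_trmx_mul_row n (v : 'rV[R]_n) : (\rank (v^T *m v) <= 1)%N.
Proof. exact: leq_trans (mxrankM_maxl _ _) (rank_leq_col _). Qed.

Lemma psd_trmx_mul_row n (v : 'rV[R]_n) : psd (v^T *m v).
Proof.
split=> [|w]; first by rewrite trmx_mul trmxK.
have -> : w *m (v^T *m v) *m w^T = (w *m v^T) *m (w *m v^T)^T.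
  by rewrite trmx_mul trmxK !mulmxA.
by rewrite mxE big_ord1 [(_ *m _)^T _ _]mxE -expr2 sqr_ge0.
Qed.

(* [counter_mx a] is [[2, 1, 1], [1, 2, a], [1, a, 2]]. *)
Definition counter_mx (a : R) : 'M[R]_3 :=
  \matrix_(i, j) if i == j then 2 else if (i + j == 3)%N then a else 1.

Lemma counter_mx_psd a : 0 <= a <= 1 -> psd (counter_mx a).
Proof.
move=> /andP[a_ge0 a_le1]; split.
  by apply/matrixP => i j; rewrite !mxE eq_sym addnC.
move=> v; rewrite !mxE !big_ord_recr !big_ord0 /= !mxE !big_ord_recr !big_ord0 /= !mxE /=.
set x := v _ (widen_ord _ (widen_ord _ _)); set y := v _ (widen_ord _ ord_max).
set z := v _ ord_max.
rewrite [X in 0 <= X](_ : _ =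
    (x + y) ^+ 2 + (x + z) ^+ 2 + a * (y + z) ^+ 2 + (1 - a) * (y ^+ 2 + z ^+ 2)).
  by do 3?apply: addr_ge0; rewrite ?sqr_ge0 // mulr_ge0 ?subr_ge0 ?addr_ge0 ?sqr_ge0.
by ring.
Qed.

Lemma mr_counter_mx_le1 t : t != 0 -> (mr (counter_mx (t * t)) <= 1)%N.
Proof.
move=> t_neq0; pose v : 'rV[R]_3 := \row_j (if j == 0 then t^-1 else t).
apply: leq_trans (mr_gen_le _) (mxrank_trmx_mul_row v); apply/asboolP.
exists (counter_mx (t * t) - v^T *m v), (v^T *m v); split=> //.
- by rewrite subrK.
- apply/is_diag_mxP => i j ij; rewrite !mxE big_ord1 !mxE.
  by case: i ij => [[|[|[|//]]]] ?; case: j => [[|[|[|//]]]] ? //= _;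
    rewrite ?mulVf ?divff ?subrr.
- exact: psd_trmx_mul_row.
Qed.

Lemma counter_mx0_rank (Dt Dh : 'M[R]_3) :
  counter_mx 0 = Dt + Dh -> is_diag_mx Dt -> (2 <= \rank Dh)%N.
Proof.
move=> DtDh /diag_mxP[d Dt_d].
have DhE : Dh = counter_mx 0 - diag_mx d by rewrite DtDh Dt_d addrC addKr.
pose Q : 'M[R]_(3, 2) := \matrix_(i, j)
  if i == 2 :> nat then (if j == 0 then 1 else d 0 0 - 2) else ((i == 0 :> nat) && (j == 1))%:R.
pose f (i : 'I_2) : 'I_3 := if i == 0 then 0 else 1.
have BQ : rowsub f Dh *m Q = 1%:M.
  apply/matrixP => i j; rewrite /Q /f DhE !mxE !big_ord_recr big_ord0 /= !mxE.
  by case: i => [[|[|//]]] ?; case: j => [[|[|//]]] ? /=; ring.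
have /eqP rank_B : row_free (rowsub f Dh) by apply/row_freeP; exists Q.
by rewrite -[X in (X <= _)%N]rank_B mxrankS ?rowsub_sub.
Qed.

Lemma mr_counter_mx0 : (2 <= mr (counter_mx 0))%N.
Proof.
rewrite /mr; have S0_psd : psd (counter_mx 0) by apply: counter_mx_psd; rewrite lexx ler01.
have /asboolP[Dt [Dh [DtDh Dt_diag _ _ <-]]] := mr_gen_feasible false S0_psd.
exact: counter_mx0_rank DtDh Dt_diag.
Qed.

Lemma mr_not_lsc : ~ lsc_on_psd (@mr R 3).
Proof.
move=> mr_lsc.
have S0_psd : psd (counter_mx 0) by apply: counter_mx_psd; rewrite lexx ler01.
have [e e_gt0 mr_le] := mr_lsc _ S0_psd.
pose t := Num.min 1 e / 2.
have [t_gt0 tt_le1 tt_lt_e] : [/\ 0 < t, t * t <= 1 & t * t < e].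
  have : 0 < Num.min 1 e <= 1 by rewrite lt_min ltr01 e_gt0 ge_min lexx.
  have : Num.min 1 e <= e by rewrite ge_min lexx orbT.
  rewrite /t; split; nra.
have close : mx_close e (counter_mx (t * t)) (counter_mx 0).
  move=> i j; rewrite !mxE; case: ifP => _; first by rewrite subrr normr0.
  case: ifP => _; last by rewrite subrr normr0.
  by rewrite subr0 ger0_norm // mulr_ge0 // ltW.
have tt_psd : psd (counter_mx (t * t)).
  by apply: counter_mx_psd; rewrite tt_le1 andbT mulr_ge0 // ltW.
have := leq_trans mr_counter_mx0 (mr_le _ tt_psd close).
by move/leq_trans/(_ (mr_counter_mx_le1 (lt0r_neq0 t_gt0))).
Qed.
End Counterexample.

Theorem proposition1 (R : realType) :
  (forall n : nat, lsc_on_psd (@mr_plus R n)) /\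
  (exists n : nat, ~ lsc_on_psd (@mr R n)).
Proof. by split=> [n|]; [exact: mr_plus_lsc | exists 3%N; exact: mr_not_lsc]. Qed.
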